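(* In the setting described in the context, for every $x\in X$ it holds that $|\pi^{-1}(\{\pi(x)\})|\leq m^{2^r}$.
   Context: Let $r\geq 2$, $G=\mathbb Z^r$ with standard basis $e_1,\dots,e_r$. For each $j$, let $(p_j^i)_{i\in\mathbb N}$ be a strictly increasing sequence of positive integers with $p_j^i\mid p_j^{i+1}$ and $p_j^i>2i+1$, and let $\Gamma_i=\langle p_j^ie_j:1\leq j\leq r\rangle$, assumed to satisfy $[\Gamma_i:\Gamma_{i+1}]>1/(1-2^{-(1/2)^{i+1}})$. Let $(D_i)_{i\in\mathbb N}$ be finite subsets of $\mathbb Z^r$ such that: each $D_i$ is a fundamental domain of $\mathbb Z^r/\Gamma_i$ of the form $\{(x_1,\dots,x_r): -q^i_{1,j}\leq x_j<q^i_{2,j},\ 1\le j\le r\}$ with integers $q^i_{1,j},q^i_{2,j}>i$, $q^i_{1,j}+q^i_{2,j}=p^i_j$; $0\in D_i\subseteq D_{i+1}$; $\bigcup_iD_i=\mathbb Z^r$; and $D_i=\bigcup_{\gamma\in D_i\cap\Gamma_{i-1}}(\gamma+D_{i-1})$ for $i\geq2$. Let $m\geq 2$, $\Sigma=\{1,\dots,m\}$, and $\alpha_i\in\Sigma$ the element with $\alpha_i\equiv i\pmod m$. Define $\eta\in\Sigma^{\mathbb Z^r}$: $J(0)=\{0\}$ and $\eta(\gamma)=\alpha_1$ for $\gamma\in\Gamma_1$; for $k\geq1$, $J(k)=D_k\setminus\bigcup_{i=0}^{k-1}(J(i)+\Gamma_{i+1})$ and $\eta(\gamma+h)=\alpha_{k+1}$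 for $h\in J(k)$, $\gamma\in\Gamma_{k+1}$. With the shift $\sigma^g(x)(h)=x(h-g)$, let $X$ be the closure of the $\sigma$-orbit of $\eta$. For $y\in\Sigma^{\mathbb Z^r}$, a subgroup $\Gamma$ and $\alpha\in\Sigma$, let $\mathrm{Per}(y,\Gamma,\alpha)=\{g: y(g-\gamma)=\alpha\ \forall\gamma\in\Gamma\}$, and $C_i=\{y\in X:\mathrm{Per}(y,\Gamma_i,\alpha)=\mathrm{Per}(\eta,\Gamma_i,\alpha)\ \forall\alpha\in\Sigma\}$. The odometer is $\overleftarrow{G}=\{(t_i+\Gamma_i)_i\in\prod_i\mathbb Z^r/\Gamma_i: t_{i+1}+\Gamma_i=t_i+\Gamma_i\}$, and $\pi:X\to\overleftarrow G$ is the factor map (onto the maximal equicontinuous factor) given by $\pi(x)=(t_i+\Gamma_i)_i$ where $\sigma^{t_i}x\in C_i$ for each $i$. *)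

From Stdlib Require Import Reals ClassicalEpsilon.
From mathcomp Require Import all_boot all_order all_algebra.

Set Implicit Arguments.
Unset Strict Implicit.
Unset Printing Implicit Defensive.

Import GRing.Theory Num.Theory.

(* Z^r, with coordinates indexed by 'I_r (j = 1..r in the paper is j = 0..r-1). *)
Definition Zr (r : nat) := 'I_r -> int.
Definition zsub r (g h : Zr r) : Zr r := fun j => (g j - h j)%R.
Definition zero (r : nat) : Zr r := fun _ => 0%R.
Arguments zero : clear implicits.

(* Configurations Sigma^{Z^r}; Sigma = {1,...,m} realised inside nat. *)
Definition Config r := Zr r -> nat.

(* alpha_i : the element of {1..m} congruent to i mod m (used for i >= 1) *)
Definition alpha (m i : nat) : nat := ((i.-1) %% m).+1.

(* Gamma_i = < p_j^i e_j : j >   (p i j = p_j^i) *)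
Definition inGamma r (p : nat -> 'I_r -> nat) (i : nat) (g : Zr r) : Prop :=
  forall j, ((p i j)%:Z %| g j)%Z.

Definition inD r (q1 q2 : nat -> 'I_r -> nat) (i : nat) (g : Zr r) : Prop :=
  forall j, (- (q1 i j)%:Z <= g j)%R /\ (g j < (q2 i j)%:Z)%R.

(* (J(k), U_{i<k} (J(i) + Gamma_{i+1})) computed together by recursion on k *)
Fixpoint Jcov r (p q1 q2 : nat -> 'I_r -> nat) (k : nat)
  : (Zr r -> Prop) * (Zr r -> Prop) :=
  match k with
  | 0 => (fun h => forall j, h j = 0%R, fun _ => False)
  | k'.+1 =>
      let JC := Jcov p q1 q2 k' in
      let c' := fun h => JC.2 h \/ exists h', JC.1 h' /\ inGamma p k'.+1 (zsub h h') in
      (fun h => inD q1 q2 k'.+1 h /\ ~ c' h, c')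
  end.

Definition J r (p q1 q2 : nat -> 'I_r -> nat) (k : nat) : Zr r -> Prop :=
  (Jcov p q1 q2 k).1.

(* eta(gamma + h) = alpha_{k+1} for h in J(k), gamma in Gamma_{k+1} (k >= 0) *)
Definition eta r (m : nat) (p q1 q2 : nat -> 'I_r -> nat) : Config r :=
  fun g => alpha m (epsilon (inhabits 0%N)
              (fun k => exists h, J p q1 q2 k h /\ inGamma p k.+1 (zsub g h))).+1.

Definition shift r (g : Zr r) (x : Config r) : Config r := fun h => x (zsub h g).

(* X = closure of the shift orbit of eta in the product (discrete) topology:
   every finite window of x is seen in some shift of eta. *)
Definition inX r m (p q1 q2 : nat -> 'I_r -> nat) (x : Config r) : Prop :=
  forall n : nat, exists g : Zr r, forall h : Zr r,
    (forall j, (`|h j| <= n%:Z)%R) -> x h = shift g (eta m p q1 q2) h.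

Definition Per r (p : nat -> 'I_r -> nat) (y : Config r) (i : nat) (a : nat) (g : Zr r)
  : Prop := forall gam, inGamma p i gam -> y (zsub g gam) = a.

Definition inC r m (p q1 q2 : nat -> 'I_r -> nat) (i : nat) (y : Config r) : Prop :=
  inX m p q1 q2 y /\
  forall a, (1 <= a <= m)%N -> forall g,
      Per p y i a g <-> Per p (eta m p q1 q2) i a g.

(* pi(x)_i = t_i + Gamma_i with sigma^{t_i} x in C_i; the coset t + Gamma_i is
   represented canonically by its reduction (t_j mod p_j^i)_j. *)
Definition piX r m (p q1 q2 : nat -> 'I_r -> nat) (x : Config r) (i : nat) : Zr r :=
  let t := epsilon (inhabits (zero r)) (fun t => inC m p q1 q2 i (shift t x)) in
  fun j => (t j %% (p i j)%:Z)%Z.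

(* [Gamma_i : Gamma_{i+1}] > 1 / (1 - 2^{-(1/2)^{i+1}}) ;
   the index is |Z^r/Gamma_{i+1}| / |Z^r/Gamma_i|. *)
Definition index_cond r (p : nat -> 'I_r -> nat) (i : nat) : Prop :=
  Rlt (Rdiv R1 (Rminus R1 (Rpower (Rplus R1 R1)
                                  (Ropp (pow (Rinv (Rplus R1 R1)) i.+1)))))
      (Rdiv (INR (\prod_(j < r) p i.+1 j)%N) (INR (\prod_(j < r) p i j)%N)).

From Pilot Require Import Defs.
From Stdlib Require Import Reals ClassicalEpsilon.
From mathcomp Require Import all_boot all_order all_algebra.
From mathcomp Require Import zify.
From Stdlib Require Import FunctionalExtensionality Classical IndefiniteDescription.
Import Order.TTheory GRing.Theory Num.Theory.

Set Implicit Arguments.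
Unset Strict Implicit.
Unset Printing Implicit Defensive.
Set Bullet Behavior "Strict Subproofs".

(** Let [S_I] be the set of positions filled before stage [I].  It is
  [Γ_I]-invariant and [η] is [Γ_I]-periodic on it, while on the remaining
  holes [J(I) + Γ_I] the value [η(h + γ)] does not depend on the hole
  [h ∈ J(I)].  Since [Γ_I] can be read off the values of [η] on any large
  enough box, a point [y ∈ X] with [σ^t y ∈ C_I] agrees on large boxes with
  [w ↦ η(w + t - γ)] for some [γ ∈ Γ_I], and along a fibre of [π] the class
  [t + Γ_I] is fixed.  Finitely many distinct points of a fibre are separated
  on a box of some radius [N]; take [I = N + 1].  Write [w + t = ρ + τ] with
  [ρ ∈ D_I] and [τ ∈ Γ_I]: as [p_j^I > 2N + 1], at most [2^r] values of [τ]
  occur on the box.  If [ρ ∈ S_I] then [y(w) = η(ρ)] for every [y] of the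
  fibre, and otherwise [ρ ∈ J(I)] and [y(w) = η(j + τ - γ)] for a fixed hole
  [j].  Hence a point of the fibre is determined on the box by [2^r] letters. *)

Definition zadd r (g h : Zr r) : Zr r := fun j => (g j + h j)%R.
Definition zopp r (g : Zr r) : Zr r := fun j => (- g j)%R.

Lemma Zr_ext r (g h : Zr r) : (forall j, g j = h j) -> g = h.
Proof. exact: functional_extensionality. Qed.

Ltac Zr_lia := move=> j; rewrite /zadd /zsub /zopp /zero; lia.
Ltac Zr_eq := apply: Zr_ext; Zr_lia.

Lemma divz_two_values (x x0 d N : int) :
  (0 < d)%R -> (x0 <= x)%R -> (x <= x0 + 2 * N)%R -> (2 * N < d)%R ->
  (x %/ d)%Z = (x0 %/ d)%Z \/ (x %/ d)%Z = ((x0 %/ d)%Z + 1)%R.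
Proof.
move=> d0 lo hi Nd; have d_neq0 : d != 0%R by lia.
have := divz_eq x d; have := divz_eq x0 d.
have := modz_ge0 x d_neq0; have := modz_ge0 x0 d_neq0.
have := ltz_mod x d_neq0; have := ltz_mod x0 d_neq0.
rewrite (_ : `|d| = d)%R; last by lia.
nia.
Qed.

Lemma alphaS_neq m k : 1 < m -> alpha m k.+1 <> alpha m k.+2.
Proof.
move=> m2; rewrite /alpha /= => -[] E.
have : (k.+1 = k %[mod m])%N by rewrite E.
by rewrite -addn1 -{2}[k]addn0 => /eqP; rewrite eqn_modDl modn_small ?mod0n.
Qed.

Section GammaLattice.
Variables (r : nat) (p : nat -> 'I_r -> nat).
Local Notation Γ := (inGamma p).

Lemma Gamma0 i : Γ i (zero r).
Proof. by move=> j; rewrite dvdz0. Qed.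

Lemma GammaD i g h : Γ i g -> Γ i h -> Γ i (zadd g h).
Proof. by move=> Gg Gh j; rewrite rpredD. Qed.

Lemma GammaN i g : Γ i g -> Γ i (zopp g).
Proof. by move=> Gg j; rewrite rpredN. Qed.

Lemma GammaB i g h : Γ i g -> Γ i h -> Γ i (zsub g h).
Proof. by move=> Gg Gh j; rewrite rpredB. Qed.

Lemma Gamma_eq i g h : (forall j, g j = h j) -> Γ i h -> Γ i g.
Proof. by move=> E Gh j; rewrite E. Qed.

Lemma Gamma_last_level I δ : 0 < I -> ~ Γ I δ ->
  exists k, [/\ k < I, 0 < k -> Γ k δ & ~ Γ k.+1 δ].
Proof.
elim: I => // -[_ _ nG|I IH _ nG]; first by exists 0.
have [GI | nGI] := classic (Γ I.+1 δ); first by exists I.+1.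
by have [k [ltkI Gk nGk]] := IH isT nGI; exists k; split=> //; apply: ltnW.
Qed.

End GammaLattice.

Ltac Gamma_as e := apply: (Gamma_eq (h := e)); first by Zr_lia.

Section Layers.
Variables (r m : nat) (p q1 q2 : nat -> 'I_r -> nat).
Local Notation Γ := (inGamma p).
Local Notation D := (inD q1 q2).
Local Notation J := (Defs.J p q1 q2).
Local Notation η := (eta m p q1 q2).

(** [covered k] is [S_k], the union of the [J(i) + Γ_{i+1}] for [i < k]. *)
Definition covered k : Zr r -> Prop := (Jcov p q1 q2 k).2.

Definition layer k (g : Zr r) := exists h, J k h /\ Γ k.+1 (zsub g h).

Lemma J0E h : J 0 h <-> forall j, h j = 0%R.
Proof. by []. Qed.

Lemma JE I h : 0 < I -> J I h <-> D I h /\ ~ covered I h.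
Proof. by case: I. Qed.

Lemma covered0 g : ~ covered 0 g.
Proof. by []. Qed.

Lemma coveredSE k g : covered k.+1 g <-> covered k g \/ layer k g.
Proof. by []. Qed.

Lemma coveredE k g : covered k g <-> exists2 k', k' < k & layer k' g.
Proof.
elim: k => [|k IH]; first by split=> // -[].
rewrite coveredSE IH; split.
- by case=> [[k' lt Lg]|Lg]; [exists k' => //; apply: ltnW | exists k].
- case=> k'; rewrite ltnS leq_eqVlt => /orP[/eqP->|lt] Lg; [by right | by left; exists k'].
Qed.

Lemma layer_GammaD k g γ : layer k g -> Γ k.+1 γ -> layer k (zadd g γ).
Proof.
move=> [h [Jh Gh]] Gγ; exists h; split=> //.
by Gamma_as (zadd (zsub g h) γ); apply: GammaD.
Qed.

Lemma eta_range g : 0 < m -> 1 <= η g <= m.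
Proof. by move=> m0; rewrite /eta /alpha /= ltn_pmod. Qed.

Lemma eta_pred_lt g : 0 < m -> (η g).-1 < m.
Proof. by move=> m0; have := eta_range g m0; case: (η g). Qed.

Lemma eta_pred_inj g g' : 0 < m -> (η g).-1 = (η g').-1 -> η g = η g'.
Proof. by move=> m0; have := eta_range g m0; have := eta_range g' m0; lia. Qed.

End Layers.

Arguments JE {r p q1 q2 I h}.

Definition box r (o : Zr r) (M : nat) (u : Zr r) :=
  forall j, (`|u j - o j| <= M%:Z)%R.

Definition supn r (w : Zr r) : nat := \max_(j < r) `|w j|%N.

Lemma supn_ge r (w : Zr r) j : (`|w j| <= (supn w)%:Z)%R.
Proof. by rewrite -abszE lez_nat; apply: (@leq_bigmax _ (fun j => `|w j|%N)). Qed.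

Lemma window_separates r n (f : 'I_n -> Config r) : injective f ->
  exists N : nat, forall k k', k != k' ->
    exists2 w : Zr r, (forall j, `|w j| <= N%:Z)%R & f k w <> f k' w.
Proof.
move=> f_inj.
have sep (kk : 'I_n * 'I_n) : exists N : nat, kk.1 != kk.2 ->
    exists2 w : Zr r, (forall j, `|w j| <= N%:Z)%R & f kk.1 w <> f kk.2 w.
  have [-> | ne] := eqVneq kk.1 kk.2; first by exists 0 => /eqP.
  have [w neq] : exists w, f kk.1 w <> f kk.2 w.
    apply: NNPP => nex; move/eqP: ne; apply; apply: f_inj.
    by apply: functional_extensionality => w; apply: NNPP => nw; apply: nex; exists w.
  by exists (supn w) => _; exists w => //; apply: supn_ge.
have [Nf HN] := functional_choice _ sep.
exists (\max_(kk : 'I_n * 'I_n) Nf kk) => k k' ne.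
have [w Bw neq] := HN (k, k') ne; exists w => // j.
by apply: le_trans (Bw j) _; rewrite lez_nat; apply: (@leq_bigmax _ Nf (k, k')).
Qed.

Section ShiftSpace.
Variables (r m : nat) (p q1 q2 : nat -> 'I_r -> nat).
Local Notation Γ := (inGamma p).
Local Notation η := (eta m p q1 q2).

Lemma inX_shift x t : inX m p q1 q2 x -> inX m p q1 q2 (shift t x).
Proof.
move=> Xx n; have [g Hg] := Xx (n + supn t).
exists (zadd t g) => h hn; rewrite /shift Hg /shift; first by congr eta; Zr_eq.
by move=> j; have := hn j; have := supn_ge t j; rewrite /zsub; lia.
Qed.

Definition C_shift I (y : Config r) : Zr r :=
  epsilon (inhabits (zero r)) (fun t => inC m p q1 q2 I (shift t y)).

Lemma piX_cong I y x : piX m p q1 q2 y I = piX m p q1 q2 x I ->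
  Γ I (zsub (C_shift I y) (C_shift I x)).
Proof.
move=> E j; move/(congr1 (fun v => v j)): E; rewrite /piX /= => Ej.
by rewrite /zsub -eqz_mod_dvd; apply/eqP.
Qed.

End ShiftSpace.

Section Toeplitz.
Variables (r m : nat) (p q1 q2 : nat -> 'I_r -> nat).
Local Notation Γ := (inGamma p).
Local Notation D := (inD q1 q2).
Local Notation J := (Defs.J p q1 q2).
Local Notation η := (eta m p q1 q2).
Local Notation covered := (covered p q1 q2).
Local Notation layer := (layer p q1 q2).

Hypothesis r_gt0 : 0 < r.
Hypothesis m_ge2 : 2 <= m.
Hypothesis p_props : forall i j, 0 < i ->
  [/\ 0 < p i j, p i j < p i.+1 j, p i j %| p i.+1 j & 2 * i + 1 < p i j].
Hypothesis q_props : forall i j, 0 < i ->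
  [/\ i < q1 i j, i < q2 i j & q1 i j + q2 i j = p i j].
Hypothesis D_fundamental : forall i, 0 < i -> forall g : Zr r, exists d,
  [/\ D i d, Γ i (zsub g d) & forall d', D i d' -> Γ i (zsub g d') -> d' = d].
Hypothesis D_exhaust : forall g : Zr r, exists i, 0 < i /\ D i g.
Hypothesis D_refine : forall i (h : Zr r), 2 <= i ->
  (D i h <-> exists gam, [/\ D i gam, Γ i.-1 gam & D i.-1 (zsub h gam)]).

Lemma p_gt0 i j : 0 < i -> 0 < p i j.
Proof. by move=> i0; case: (p_props j i0). Qed.

Lemma p_dvd i k j : 0 < i -> i <= k -> p i j %| p k j.
Proof.
move=> i0; elim: k => [|k IH]; first by rewrite leqNgt i0.
rewrite leq_eqVlt ltnS => /orP[/eqP-> | le]; first exact: dvdnn.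
by have [_ _ dvdS _] := p_props j (leq_trans i0 le); apply: dvdn_trans (IH le) dvdS.
Qed.

Lemma p_leq i k j : 0 < i -> i <= k -> p i j <= p k j.
Proof. by move=> i0 le; apply: dvdn_leq (p_dvd j i0 le); apply: p_gt0 (leq_trans i0 le). Qed.

Lemma Gamma_le i k g : 0 < i -> i <= k -> Γ k g -> Γ i g.
Proof. by move=> i0 le Gg j; apply: dvdz_trans (Gg j); rewrite dvdzE p_dvd. Qed.

Lemma GammaS k g : 0 < k -> Γ k.+1 g -> Γ k g.
Proof. by move=> k0; apply: Gamma_le k0 (leqnSn k). Qed.

Lemma Gamma_step k : exists δ, (0 < k -> Γ k δ) /\ ~ Γ k.+1 δ.
Proof.
pose j0 := Ordinal r_gt0.
exists (fun j => if j == j0 then (if k is 0 then 1 else p k j0)%:Z else 0)%R; split.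
- case: k => // k _ j; case: eqP => [->|_]; [exact: dvdzz | exact: dvdz0].
- move/(_ j0); rewrite eqxx dvdzE /=; case: k => [|k].
  + have [_ _ _ big] := p_props j0 (ltn0Sn 0).
    by rewrite dvdn1 => /eqP p1; rewrite p1 in big.
  + have [p0 lt _ _] := p_props j0 (ltn0Sn k).
    by move/(dvdn_leq p0); rewrite leqNgt lt.
Qed.

Definition drep i (u : Zr r) : Zr r :=
  fun j => (((u j + (q1 i j)%:Z) %% (p i j)%:Z)%Z - (q1 i j)%:Z)%R.

Lemma drep_D i u : 0 < i -> D i (drep i u).
Proof.
move=> i0 j; rewrite /drep.
have [_ _ pq] := q_props j i0; have p0 := p_gt0 j i0.
have pz : ((p i j)%:Z != 0)%R by lia.
have := modz_ge0 (u j + (q1 i j)%:Z)%R pz; have := ltz_mod (u j + (q1 i j)%:Z)%R pz.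
rewrite (_ : `|(p i j)%:Z| = (p i j)%:Z)%R; last by lia.
lia.
Qed.

Lemma drep_cong i u : Γ i (zsub u (drep i u)).
Proof.
move=> j; rewrite /drep /zsub.
have := divz_eq (u j + (q1 i j)%:Z)%R (p i j)%:Z.
set a := (_ %/ _)%Z; set b := (_ %% _)%Z => E.
rewrite (_ : (u j - (b - _))%R = a * (p i j)%:Z)%R; last by lia.
exact: dvdz_mull (dvdzz _).
Qed.

Lemma D_cong_eq i d d' : 0 < i -> D i d -> D i d' -> Γ i (zsub d d') -> d = d'.
Proof.
move=> i0 Dd Dd' Gdd'; have [d0 [_ _ uniq_d0]] := D_fundamental i0 d.
rewrite (uniq_d0 d' Dd' Gdd') (uniq_d0 d Dd) //.
by Gamma_as (zero r); apply: Gamma0.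
Qed.

Lemma box_meets_coset k M o z : 0 < k -> (forall j, p k j <= M) ->
  exists2 v, box o M v & Γ k (zsub v z).
Proof.
move=> k0 hM; exists (fun j => (o j + ((z j - o j) %% (p k j)%:Z)%Z)%R) => j.
- have p0 := p_gt0 j k0; have pz : ((p k j)%:Z != 0)%R by lia.
  have := modz_ge0 (z j - o j)%R pz; have := ltz_mod (z j - o j)%R pz.
  rewrite (_ : `|(p k j)%:Z| = (p k j)%:Z)%R; last by lia.
  by have := hM j; lia.
- have := divz_eq (z j - o j)%R (p k j)%:Z; rewrite /zsub.
  set a := (_ %/ _)%Z; set b := (_ %% _)%Z => E.
  rewrite (_ : (o j + b - z j)%R = - a * (p k j)%:Z)%R; last by lia.
  exact: dvdz_mull (dvdzz _).
Qed.

Lemma covered_cong k g h : 0 < k -> Γ k (zsub g h) -> covered k h -> covered k g.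
Proof.
move=> k0 Ggh /coveredE[k' ltk' [h' [Jh' Gh']]]; apply/coveredE; exists k' => //.
exists h'; split=> //; Gamma_as (zadd (zsub g h) (zsub h h')).
by apply: GammaD Gh'; apply: Gamma_le Ggh.
Qed.

Lemma layer_uncovered k g : layer k g -> ~ covered k g.
Proof.
case: k => [|k] [h [Jh Gh]] Sg; first exact: covered0 Sg.
have [_ nSh] := (JE (ltn0Sn k)).1 Jh; apply: nSh.
apply: covered_cong Sg => //; Gamma_as (zopp (zsub g h)).
by apply/GammaN/GammaS.
Qed.

Lemma layer_unique k k' g : layer k g -> layer k' g -> k = k'.
Proof.
move=> Lk Lk'; case: (ltngtP k k') => // lt.
- by case: (layer_uncovered Lk'); apply/coveredE; exists k.
- by case: (layer_uncovered Lk); apply/coveredE; exists k'.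
Qed.

Lemma layerE k g : layer k g <-> covered k.+1 g /\ ~ covered k g.
Proof.
split; last by case=> /coveredSE[].
by move=> Lg; split; [apply/coveredSE; right | exact: layer_uncovered].
Qed.

Lemma layer_exists g : exists k, layer k g.
Proof.
have [i [i0 Dg]] := D_exhaust g.
have [/coveredE[k _ Lg] | nSg] := classic (covered i g); first by exists k.
case: i i0 Dg nSg => // i _ Dg nSg; exists i.+1, g; split; first exact/(JE (ltn0Sn i)).
by Gamma_as (zero r); apply: Gamma0.
Qed.

Lemma eta_layer k g : layer k g -> η g = alpha m k.+1.
Proof.
move=> Lg; rewrite /eta; set P := fun k => _.
by rewrite (layer_unique (epsilon_spec (inhabits 0) P (layer_exists g)) Lg).
Qed.

Lemma eta_periodic I u γ : 0 < I -> covered I u -> Γ I γ -> η (zadd u γ) = η u.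
Proof.
move=> I0 /coveredE[k ltkI Lu] Gγ.
have Luγ := layer_GammaD Lu (Gamma_le (ltn0Sn k) ltkI Gγ).
by rewrite (eta_layer Lu) (eta_layer Luγ).
Qed.

Lemma J_cong_eq k h h' : J k h -> J k h' -> (0 < k -> Γ k (zsub h h')) -> h = h'.
Proof.
case: k => [|k] Jh Jh' Ghh'.
- by apply: Zr_ext => j; rewrite (proj1 (J0E _ _ _ _) Jh) (proj1 (J0E _ _ _ _) Jh').
- have [Dh _] := (JE (ltn0Sn k)).1 Jh; have [Dh' _] := (JE (ltn0Sn k)).1 Jh'.
  exact: D_cong_eq (ltn0Sn k) Dh Dh' (Ghh' isT).
Qed.

Lemma J_succ_drep k h δ : J k h -> (0 < k -> Γ k δ) -> ~ Γ k.+1 δ ->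
  J k.+1 (drep k.+1 (zadd h δ)).
Proof.
move=> Jh Gδ nGδ; set ρ := drep _ _.
have Gρ : Γ k.+1 (zsub (zadd h δ) ρ) := drep_cong _ _.
have Ghρ : 0 < k -> Γ k (zsub h ρ).
  move=> k0; Gamma_as (zsub (zsub (zadd h δ) ρ) δ).
  by apply: GammaB (Gδ k0); apply: GammaS.
apply/(JE (ltn0Sn k)); split; first exact: drep_D.
case/coveredSE => [Sρ | [h' [Jh' Gh']]].
- have [k0 | k_gt0] := posnP k; first by rewrite k0 in Sρ; apply: covered0 Sρ.
  have [_ nSh] := (JE k_gt0).1 Jh.
  exact: nSh (covered_cong k_gt0 (Ghρ k_gt0) Sρ).
- have ehh' : h = h'.
    apply: J_cong_eq Jh Jh' _ => k0; Gamma_as (zadd (zsub h ρ) (zsub ρ h')).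
    by apply: GammaD (Ghρ k0) (GammaS k0 Gh').
  apply: nGδ; rewrite -ehh' in Gh'.
  by Gamma_as (zadd (zsub (zadd h δ) ρ) (zsub ρ h)); apply: GammaD.
Qed.

Lemma J_nonempty k : exists h, J k h.
Proof.
elim: k => [|k [h Jh]]; first by exists (zero r).
have [δ [Gδ nGδ]] := Gamma_step k.
by exists (drep k.+1 (zadd h δ)); apply: J_succ_drep.
Qed.

Lemma J_drep_uncovered I u : 0 < I -> ~ covered I u -> J I (drep I u).
Proof.
move=> I0 nSu; apply/(JE I0); split; first exact: drep_D.
by move=> S; apply: nSu; apply: covered_cong I0 (drep_cong I u) S.
Qed.

Lemma uncovered_coset_two_values I M o u : 0 < I -> ~ covered I u ->
  (forall j, p I.+2 j <= M) ->
  exists v1 v2, [/\ box o M v1, box o M v2, Γ I (zsub v1 u), Γ I (zsub v2 u)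
                  & η v1 <> η v2].
Proof.
move=> I0 nSu hM.
set h := drep I u; have Jh : J I h := J_drep_uncovered I0 nSu.
have Ghu : Γ I (zsub u h) := drep_cong I u.
have [δ [Gδ nGδ]] := Gamma_step I.
set h' := drep I.+1 (zadd h δ); have Jh' : J I.+1 h' := J_succ_drep Jh Gδ nGδ.
have Gh' : Γ I.+1 (zsub (zadd h δ) h') := drep_cong _ _.
have [v1 B1 G1] := box_meets_coset o h (ltn0Sn I.+1) hM.
have [v2 B2 G2] := box_meets_coset o h' (ltn0Sn I.+1) hM.
have G1' := GammaS (ltn0Sn I) G1.
exists v1, v2; split=> //.
- by Gamma_as (zsub (zsub v1 h) (zsub u h)); apply: GammaB (GammaS I0 G1') Ghu.
- Gamma_as (zadd (zsub (zsub v2 h') (zsub (zadd h δ) h')) (zsub δ (zsub u h))).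
  apply: GammaD; apply: GammaB.
  + exact: GammaS I0 (GammaS (ltn0Sn I) G2).
  + exact: GammaS I0 Gh'.
  + exact: Gδ I0.
  + exact: Ghu.
- have L1 : layer I v1 by exists h.
  have L2 : layer I.+1 v2 by exists h'.
  by rewrite (eta_layer L1) (eta_layer L2); apply: alphaS_neq.
Qed.

Lemma eta_period I M o δ : 0 < I -> (forall j, p I.+1 j <= M) ->
  (forall u, box o M u -> covered I u -> η (zadd u δ) = η u) -> Γ I δ.
Proof.
move=> I0 hM periodic; apply: NNPP => nGδ.
(* [δ] moves a point of layer [k] into layer [k+1], whose letter differs. *)
have [k [ltkI Gkδ nGkδ]] := Gamma_last_level I0 nGδ.
have [h Jh] := J_nonempty k.
set h' := drep k.+1 (zadd h δ); have Jh' : J k.+1 h' := J_succ_drep Jh Gkδ nGkδ.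
have Gh' : Γ k.+1 (zsub (zadd h δ) h') := drep_cong _ _.
have hM' j : p k.+2 j <= M by apply: leq_trans (hM j); apply: p_leq.
have [u Bu Gu] := box_meets_coset o (zsub h' δ) (ltn0Sn k.+1) hM'.
have Lu : layer k u.
  exists h; split=> //; Gamma_as (zsub (zsub u (zsub h' δ)) (zsub (zadd h δ) h')).
  by apply: GammaB Gh'; apply: GammaS.
have Luδ : layer k.+1 (zadd u δ) by exists h'; split=> //; Gamma_as (zsub u (zsub h' δ)).
have Su : covered I u by apply/coveredE; exists k.
by have := periodic u Bu Su; rewrite (eta_layer Lu) (eta_layer Luδ); apply/nesym/alphaS_neq.
Qed.

Lemma D_translate I d h h' γ : 0 < I -> D I h -> D I h' -> Γ I γ ->
  D (I + d) (zadd h γ) -> D (I + d) (zadd h' γ).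
Proof.
move=> I0 Dh Dh'; elim: d γ => [|d IH] γ Gγ.
- rewrite addn0 => Dhγ.
  have Ehγ : zadd h γ = h by apply: D_cong_eq I0 Dhγ Dh _; Gamma_as γ.
  suff -> : zadd h' γ = h' by [].
  by apply: Zr_ext => j; move/(congr1 (fun v => v j)): Ehγ; rewrite /zadd; lia.
- have Id2 : 2 <= (I + d).+1 by rewrite ltnS (leq_trans I0) ?leq_addr.
  have Eh g0 g : zsub (zadd g0 γ) g = zadd g0 (zsub γ g) by Zr_eq.
  rewrite addnS => /(D_refine _ Id2)[g [Dg Gg Dhg]].
  apply/(D_refine _ Id2); exists g; split=> //; rewrite /= Eh.
  rewrite Eh in Dhg; apply: IH Dhg; apply: GammaB Gγ _.
  exact: Gamma_le I0 (leq_addr d I) Gg.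
Qed.

Lemma layer_translate I k h h' γ : 0 < I -> J I h -> J I h' -> Γ I γ ->
  (forall g g' ξ, J I g -> J I g' -> Γ I ξ ->
     covered k (zadd g ξ) -> covered k (zadd g' ξ)) ->
  layer k (zadd h γ) -> layer k (zadd h' γ).
Proof.
move=> I0 Jh Jh' Gγ covered_k [h'' [Jh'' Gh'']].
have [Dh nSh] := (JE I0).1 Jh; have [Dh' _] := (JE I0).1 Jh'.
have leIk : I <= k.
  rewrite leqNgt; apply/negP => ltkI; apply: nSh.
  apply: (covered_cong I0 (h := zadd h γ)); first by Gamma_as (zopp γ); apply: GammaN.
  by apply/coveredE; exists k => //; exists h''.
have k0 : 0 < k := leq_trans I0 leIk.
have [Dh'' nSh''] := (JE k0).1 Jh''.
have Gξ : Γ I (zsub h'' h).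
  Gamma_as (zadd (zopp (zsub (zadd h γ) h'')) γ).
  by apply: GammaD Gγ; apply/GammaN/(Gamma_le I0 (leqW leIk)).
have Eh'' : zadd h (zsub h'' h) = h'' by Zr_eq.
exists (zadd h' (zsub h'' h)); split.
- apply/(JE k0); split.
  + rewrite -(subnKC leIk); apply: D_translate I0 Dh Dh' Gξ _.
    by rewrite subnKC // Eh''.
  + by move/(covered_k _ _ _ Jh' Jh Gξ); rewrite Eh''.
- by Gamma_as (zsub (zadd h γ) h'').
Qed.

Lemma covered_translate I k h h' γ : 0 < I -> J I h -> J I h' -> Γ I γ ->
  covered k (zadd h γ) -> covered k (zadd h' γ).
Proof.
move=> I0; elim: k h h' γ => [|k IH] h h' γ Jh Jh' Gγ; first by move/covered0.
case/coveredSE=> [S | L]; apply/coveredSE; first by left; apply: IH S.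
by right; apply: layer_translate I0 Jh Jh' Gγ IH L.
Qed.

Lemma eta_translate I h h' γ : 0 < I -> J I h -> J I h' -> Γ I γ ->
  η (zadd h γ) = η (zadd h' γ).
Proof.
move=> I0 Jh Jh' Gγ; have [k Lk] := layer_exists (zadd h γ).
have Lk' : layer k (zadd h' γ).
  move/layerE: (Lk) => [S nS]; apply/layerE.
  split; first exact: covered_translate I0 Jh Jh' Gγ S.
  by move/(covered_translate I0 Jh' Jh Gγ).
by rewrite (eta_layer Lk) (eta_layer Lk').
Qed.

Let m_gt0 : 0 < m := ltnW m_ge2.

Lemma inC_covered I t y u : 0 < I -> inC m p q1 q2 I (shift t y) -> covered I u ->
  y (zsub u t) = η u.
Proof.
move=> I0 [_ same_periods] Su.
have Pu : Per p η I (η u) u.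
  move=> γ Gγ; rewrite (_ : zsub u γ = zadd u (zopp γ)); last by Zr_eq.
  by apply: eta_periodic; last exact: GammaN.
have := (same_periods _ (eta_range p q1 q2 u m_gt0) u).2 Pu (zero r) (Gamma0 _ _).
by rewrite /shift (_ : zsub u (zero r) = u) //; Zr_eq.
Qed.

Lemma inC_of_shadow I N o y : 0 < I -> inX m p q1 q2 y -> (forall j, p I.+2 j <= N) ->
  (forall w, exists2 δ, Γ I δ & y w = η (zsub w δ)) ->
  (forall v, box o N v -> y v = η v) -> inC m p q1 q2 I y.
Proof.
move=> I0 Xy hN shadow y_box; split=> // a _ g; split=> Pg γ Gγ.
- have [δ Gδ yg] := shadow g.
  have ya : y g = a by rewrite -(Pg _ (Gamma0 _ _)); congr y; Zr_eq.
  have [Sg | nSg] := classic (covered I (zsub g γ)).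
  + rewrite -ya yg (_ : zsub g δ = zadd (zsub g γ) (zsub γ δ)); last by Zr_eq.
    by rewrite (eta_periodic I0 Sg) //; apply: GammaB.
  + have [v1 [v2 [B1 B2 G1 G2 []]]] := uncovered_coset_two_values o I0 nSg hN.
    suff y_a v : box o N v -> Γ I (zsub v (zsub g γ)) -> η v = a.
      by rewrite (y_a v1) ?(y_a v2).
    move=> Bv Gv; rewrite -y_box // -(Pg (zsub g v)); first by congr y; Zr_eq.
    by Gamma_as (zsub γ (zsub v (zsub g γ))); apply: GammaB.
- have [δ Gδ ->] := shadow (zsub g γ).
  by rewrite (_ : zsub _ δ = zsub g (zadd γ δ)); [apply/Pg/GammaD | Zr_eq].
Qed.

Lemma inC_shift_exists I y : 0 < I -> inX m p q1 q2 y ->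
  exists t, inC m p q1 q2 I (shift t y).
Proof.
move=> I0 Xy; have [g Hg] := functional_choice _ Xy.
pose N := \max_(j < r) p I.+2 j.
have hN2 j : p I.+2 j <= N by apply: (@leq_bigmax _ (fun j => p I.+2 j)).
have hN1 j : p I.+1 j <= N by apply: leq_trans (hN2 j); apply: p_leq.
pose c := g N.
have g_cong n : N <= n -> Γ I (zsub (g n) c).
  move=> leNn; apply: (eta_period (o := zopp (g n)) I0 hN1) => u Bu Su.
  have BuN j : (`|zadd u (g n) j| <= N%:Z)%R by have := Bu j; rewrite /zadd /zopp; lia.
  have Bun j : (`|zadd u (g n) j| <= n%:Z)%R by have := BuN j; lia.
  move: (Hg N _ BuN) (Hg n _ Bun); rewrite /shift => -> /esym.
  rewrite (_ : zsub (zadd u (g n)) (g n) = u); last by Zr_eq.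
  by rewrite (_ : zsub (zadd u (g n)) c = zadd u (zsub (g n) c)); last by Zr_eq.
exists (zopp c); apply: (inC_of_shadow (o := zopp c) I0 (inX_shift _ Xy) hN2).
- move=> w; pose n := maxn N (supn (zsub w (zopp c))).
  exists (zsub (g n) c); first exact/g_cong/leq_maxl.
  rewrite /shift (Hg n) /shift; first by congr eta; Zr_eq.
  by move=> j; apply: le_trans (supn_ge _ j) _; rewrite lez_nat leq_maxr.
- move=> v Bv; rewrite /shift (Hg N) /shift -/c; first by congr eta; Zr_eq.
  by move=> j; have := Bv j; rewrite /zsub /zopp; lia.
Qed.

Lemma C_shiftP I y : 0 < I -> inX m p q1 q2 y ->
  inC m p q1 q2 I (shift (C_shift m p q1 q2 I y) y).
Proof. by move=> I0 Xy; apply: (epsilon_spec _ _ (inC_shift_exists I0 Xy)). Qed.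

Lemma fibre_window I M y t : 0 < I -> inX m p q1 q2 y ->
  Γ I (zsub (C_shift m p q1 q2 I y) t) -> (forall j, p I.+1 j <= M) ->
  exists2 γ, Γ I γ &
    forall w, (forall j, `|w j| <= M%:Z)%R -> y w = η (zsub (zadd w t) γ).
Proof.
move=> I0 Xy Gst hM; have [g Hg] := Xy M.
set s := C_shift m p q1 q2 I y.
have Gsg : Γ I (zopp (zadd s g)).
  apply: (eta_period (o := s) I0 hM) => u Bu Su.
  rewrite -(inC_covered I0 (C_shiftP I0 Xy) Su) (Hg (zsub u s)) // /shift.
  by congr eta; Zr_eq.
exists (zadd t g).
- by Gamma_as (zsub (zopp (zsub s t)) (zopp (zadd s g))); apply/GammaB/Gsg/GammaN.
- by move=> w Bw; rewrite (Hg w Bw) /shift; congr eta; Zr_eq.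
Qed.

Lemma window_offsets I N t : 0 < I -> (forall j, 2 * N < p I j) ->
  exists τ : {ffun 'I_r -> bool} -> Zr r, forall w, (forall j, `|w j| <= N%:Z)%R ->
    exists b, zsub (zadd w t) (drep I (zadd w t)) = τ b.
Proof.
move=> I0 hpN.
pose A j := ((t j - N%:Z + (q1 I j)%:Z) %/ (p I j)%:Z)%Z.
exists (fun (b : {ffun 'I_r -> bool}) j => ((A j + (b j : nat)%:Z) * (p I j)%:Z)%R) => w Bw.
exists [ffun j => ((w j + t j + (q1 I j)%:Z) %/ (p I j)%:Z)%Z != A j].
apply: Zr_ext => j; rewrite /zsub /zadd /drep ffunE.
have p0 := p_gt0 j I0; have Np := hpN j; have Bj := Bw j.
have := divz_eq (w j + t j + (q1 I j)%:Z)%R (p I j)%:Z.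
set X := (w j + t j + _)%R => E.
have [e|e] : (X %/ (p I j)%:Z)%Z = A j \/ (X %/ (p I j)%:Z)%Z = (A j + 1)%R.
  by apply: (divz_two_values (N := N%:Z)); rewrite /X; lia.
- by rewrite e eqxx /=; rewrite e in E; lia.
- rewrite e (_ : ((A j + 1)%R != A j) = true); last by apply/negP => /eqP; lia.
  by rewrite e in E; lia.
Qed.

Lemma window_determined I N t (τ : {ffun 'I_r -> bool} -> Zr r) j0 γ γ' :
  0 < I -> J I j0 -> Γ I γ -> Γ I γ' ->
  (forall w, (forall j, `|w j| <= N%:Z)%R ->
     exists b, zsub (zadd w t) (drep I (zadd w t)) = τ b) ->
  (forall b, η (zadd j0 (zsub (τ b) γ)) = η (zadd j0 (zsub (τ b) γ'))) ->
  forall w, (forall j, `|w j| <= N%:Z)%R ->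
    η (zsub (zadd w t) γ) = η (zsub (zadd w t) γ').
Proof.
move=> I0 Jj0 Gγ Gγ' offsets same_on_hole w Bw.
have [b Eτ] := offsets w Bw; set ρ := drep I (zadd w t) in Eτ.
have Gτ : Γ I (τ b) by rewrite -Eτ; apply: drep_cong.
have split_w γ0 : zsub (zadd w t) γ0 = zadd ρ (zsub (τ b) γ0) by rewrite -Eτ; Zr_eq.
have [Gτγ Gτγ'] := (GammaB Gτ Gγ, GammaB Gτ Gγ').
rewrite !split_w; have [Sρ | nSρ] := classic (covered I ρ).
- by rewrite (eta_periodic I0 Sρ Gτγ) (eta_periodic I0 Sρ Gτγ').
- have Jρ : J I ρ by apply/(JE I0); split; first exact: drep_D.
  by rewrite (eta_translate I0 Jρ Jj0 Gτγ) (eta_translate I0 Jρ Jj0 Gτγ').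
Qed.

Lemma fibre_card x n (f : 'I_n -> Config r) : inX m p q1 q2 x -> injective f ->
  (forall k, inX m p q1 q2 (f k) /\
             forall i, 0 < i -> piX m p q1 q2 (f k) i = piX m p q1 q2 x i) ->
  n <= m ^ (2 ^ r).
Proof.
move=> Xx f_inj fibre.
have [N sep] := window_separates f_inj.
pose I := N.+1; have I0 : 0 < I by [].
have hpI j : 2 * N < p I j by have [_ _ _] := p_props j I0; rewrite /I; lia.
pose M := maxn N (\max_(j < r) p I.+1 j).
have hM j : p I.+1 j <= M.
  by apply: leq_trans (leq_maxr N _); apply: (@leq_bigmax _ (fun j => p I.+1 j)).
pose t := C_shift m p q1 q2 I x.
have windows k : exists γ, Γ I γ /\
    forall w, (forall j, `|w j| <= M%:Z)%R -> f k w = η (zsub (zadd w t) γ).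
  have [Xk πk] := fibre k.
  by have [γ] := fibre_window I0 Xk (piX_cong (πk I I0)) hM; exists γ.
have [γ Hγ] := functional_choice _ windows.
have [τ offsets] := window_offsets t I0 hpI.
have [j0 Jj0] := J_nonempty I.
pose code k := [ffun b => Ordinal (eta_pred_lt p q1 q2 (zadd j0 (zsub (τ b) (γ k))) m_gt0)].
suff code_inj : injective code.
  by have := leq_card code code_inj; rewrite !card_ffun !card_ord card_bool.
move=> k k' Ek; have [// | ne] := eqVneq k k'; exfalso.
have [w Bw] := sep k k' ne; apply.
have BwM j : (`|w j| <= M%:Z)%R by apply: le_trans (Bw j) _; rewrite lez_nat leq_maxl.
have [Gk fk] := Hγ k; have [Gk' fk'] := Hγ k'.
rewrite (fk w BwM) (fk' w BwM).
apply: (window_determined I0 Jj0 Gk Gk' offsets _ Bw) => b.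
apply: (eta_pred_inj m_gt0).
by move/(congr1 (fun c : {ffun {ffun 'I_r -> bool} -> 'I_m} => val (c b))): Ek; rewrite !ffunE.
Qed.

End Toeplitz.

Theorem proposition4p8 (r m : nat) (p q1 q2 : nat -> 'I_r -> nat) :
  (2 <= r)%N -> (2 <= m)%N ->
  (* p_j^i : strictly increasing positive, dividing chain, p_j^i > 2i+1 *)
  (forall i j, (0 < i)%N ->
     [/\ (0 < p i j)%N, (p i j < p i.+1 j)%N, (p i j %| p i.+1 j)%N
       & (2 * i + 1 < p i j)%N]) ->
  (forall i, (0 < i)%N -> index_cond p i) ->
  (* D_i is the box given by q1, q2 *)
  (forall i j, (0 < i)%N ->
     [/\ (i < q1 i j)%N, (i < q2 i j)%N & (q1 i j + q2 i j = p i j)%N]) ->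
  (* D_i is a fundamental domain of Z^r / Gamma_i *)
  (forall i, (0 < i)%N -> forall g : Zr r, exists d,
     [/\ inD q1 q2 i d, inGamma p i (zsub g d)
       & forall d', inD q1 q2 i d' -> inGamma p i (zsub g d') -> d' = d]) ->
  (forall i, (0 < i)%N -> inD q1 q2 i (zero r)) ->
  (forall i h, (0 < i)%N -> inD q1 q2 i h -> inD q1 q2 i.+1 h) ->
  (forall g : Zr r, exists i, (0 < i)%N /\ inD q1 q2 i g) ->
  (forall i (h : Zr r), (2 <= i)%N ->
     (inD q1 q2 i h <->
      exists gam, [/\ inD q1 q2 i gam, inGamma p i.-1 gam
                    & inD q1 q2 i.-1 (zsub h gam)])) ->
  forall x : Config r, inX m p q1 q2 x ->
  forall (n : nat) (f : 'I_n -> Config r), injective f ->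
  (forall k, inX m p q1 q2 (f k) /\
             forall i, (0 < i)%N -> piX m p q1 q2 (f k) i = piX m p q1 q2 x i) ->
  (n <= m ^ (2 ^ r))%N.
Proof.
(* The index condition and the nesting [0 ∈ D_i ⊆ D_{i+1}] are not needed. *)
move=> r2 m2 p_props _ q_props D_fund _ _ D_exhaust D_refine x Xx n f f_inj fibre.
exact: (fibre_card (ltnW r2) m2 p_props q_props D_fund D_exhaust D_refine Xx f_inj fibre).
Qed.
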